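(* Let $(\mathcal{S},d_S)$ and $(\mathcal{T},d_T)$ be totally bounded premetric spaces, and let $\mathcal{U}(\mathcal{S},\mathcal{T})$ be the set of metric-preserving functions $f:\mathcal{S}\to\mathcal{T}$ (i.e. $d_T(f(x),f(y))=d_S(x,y)$ for all $x,y$), equipped with $d(f,g)=\sup_{x\in\mathcal{S}}d_T(f(x),g(x))$. Then $(\mathcal{U}(\mathcal{S},\mathcal{T}),d)$ is a totally bounded premetric space.
   Context: A premetric space is a set $X$ with a function $d:X\times X\to[0,\infty)$ such that $d(x,x)=0$, $d(x,y)=d(y,x)$, and $d(x,z)\le d(x,y)+d(y,z)$ for all $x,y,z$ ($d(x,y)=0$ need not imply $x=y$). The ball $B_\epsilon(x)=\{y: d(x,y)<\epsilon\}$; the space is totally bounded if for every $\epsilon>0$ finitely many balls of radius $\epsilon$ cover it. *)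

From HB Require Import structures.
From mathcomp Require Import all_boot all_order all_algebra.
From mathcomp Require Import all_classical all_reals.
Set Implicit Arguments. Unset Strict Implicit. Unset Printing Implicit Defensive.
Import Order.TTheory GRing.Theory Num.Theory.
Local Open Scope classical_set_scope.
Local Open Scope ring_scope.

Definition premetric (R : realType) (X : Type) (d : X -> X -> R) : Prop :=
  [/\ forall x y, 0 <= d x y,
      forall x, d x x = 0,
      forall x y, d x y = d y x &
      forall x y z, d x z <= d x y + d y z].

Definition pball (R : realType) (X : Type) (d : X -> X -> R) (x : X) (eps : R)
  : set X := [set y | d x y < eps].

Definition totally_bounded_pm (R : realType) (X : Type) (d : X -> X -> R) : Prop :=
  forall eps : R, 0 < eps ->
    exists (n : nat) (c : 'I_n -> X), forall y : X, exists i : 'I_n, pball d (c i) eps y.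

Definition metric_preserving (R : realType) (S T : Type)
  (dS : S -> S -> R) (dT : T -> T -> R) (f : S -> T) : Prop :=
  forall x y, dT (f x) (f y) = dS x y.

Definition mp_fun (R : realType) (S T : Type) (dS : S -> S -> R) (dT : T -> T -> R) :=
  {f : S -> T | metric_preserving dS dT f}.

Definition sup_dist (R : realType) (S T : Type) (dS : S -> S -> R) (dT : T -> T -> R)
  (f g : mp_fun dS dT) : R :=
  sup [set dT (proj1_sig f x) (proj1_sig g x) | x in [set: S]].
Arguments sup_dist {R S T} dS dT f g.

From mathcomp Require Import all_boot all_order all_algebra.
From mathcomp Require Import all_classical all_reals.
From mathcomp Require Import lra.
Set Implicit Arguments. Unset Strict Implicit. Unset Printing Implicit Defensive.
Import Order.TTheory GRing.Theory Num.Theory.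
Local Open Scope classical_set_scope.
Local Open Scope ring_scope.

(* Fix an eps/8-net s of S and an eps/8-net t of T.  Record for each
   metric-preserving f which ball of t contains f (s i), for every i: there
   are finitely many such codes, and two maps with the same code are within
   eps/2 of each other, since for x near s i
   dT (f x) (g x) <= dS x (s i) + dT (f (s i)) (g (s i)) + dS (s i) x.
   One representative per code is then a finite eps-net of the maps. *)

Section SupImage.
Variables (R : realType) (X : Type) (F : X -> R).

Lemma sup_image_ge0 : (forall x, 0 <= F x) -> 0 <= sup [set F x | x in [set: X]].
Proof.
move=> F0; have [sup_ex|no_sup] := pselect (has_sup [set F x | x in [set: X]]).
  case: (sup_ex) => -[_ [x _ _]] _.
  by apply: le_trans (F0 x) (sup_upper_bound sup_ex _); exists x.
by rewrite sup_out.
Qed.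

(* The hypothesis [0 <= M] covers the empty case, where [sup set0 = 0]. *)
Lemma sup_image_le M :
  (forall x, F x <= M) -> 0 <= M -> sup [set F x | x in [set: X]] <= M.
Proof.
move=> FM M0; have [[ne _]|no_sup] := pselect (has_sup [set F x | x in [set: X]]).
  by apply: ge_sup => // _ [x _ <-].
by rewrite sup_out.
Qed.

Lemma le_sup_image B x : (forall x, F x <= B) -> F x <= sup [set F x | x in [set: X]].
Proof.
by move=> FB; apply: ub_le_sup; [exists B => _ [y _ <-] | exists x].
Qed.

End SupImage.

Section TotallyBounded.
Variables (R : realType) (X : Type) (d : X -> X -> R).

Lemma totally_bounded_pm_bounded :
  premetric d -> totally_bounded_pm d -> exists B, forall x y, d x y <= B.
Proof.
move=> [d_ge0 _ dC d_tri] /(_ 1 ltr01) [n [c cover]].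
pose D := \sum_(i < n) \sum_(j < n) d (c i) (c j).
exists (2 + D) => x y.
have [i xi] := cover x; have [j yj] := cover y.
have cij : d (c i) (c j) <= D.
  rewrite /D (bigD1 i) //= (bigD1 j) //= -addrA lerDl addr_ge0 //.
    exact: sumr_ge0.
  by apply: sumr_ge0 => k _; apply: sumr_ge0.
have := d_tri x (c i) y; have := d_tri (c i) (c j) y; rewrite /pball /= dC in xi yj.
lra.
Qed.

Lemma totally_bounded_pm_of_code :
  (forall eps, 0 < eps -> exists (K : finType) (code : X -> K),
     forall x y, code x = code y -> d x y < eps) ->
  totally_bounded_pm d.
Proof.
move=> codeP eps eps0; have [K [code close]] := codeP eps eps0.
have [[x0]|X0] := pselect (inhabited X); last first.
  have no_center : 'I_0 -> X by case.
  by exists 0%N, no_center => x; case: X0.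
have /choice [rep repP] : forall k : K,
    exists x, (exists y, code y = k) -> code x = k.
  move=> k; have [[y <-]|no_y] := pselect (exists y, code y = k).
    by exists y.
  by exists x0 => ky; case: no_y.
exists #|K|, (fun p => rep (enum_val p)) => y.
exists (enum_rank (code y)); rewrite /pball /= enum_rankK.
by apply: close; apply: repP; exists y.
Qed.

End TotallyBounded.

Section MetricPreservingMaps.
Variables (R : realType) (S T : Type) (dS : S -> S -> R) (dT : T -> T -> R).
Hypothesis dT_premetric : premetric dT.

Lemma sup_dist_premetric :
  (exists B, forall x y, dT x y <= B) -> premetric (sup_dist dS dT).
Proof.
case: dT_premetric => dT_ge0 dTxx dTC dT_tri [B dT_le].
split.
- by move=> f g; apply: sup_image_ge0.
- move=> f; apply/le_anti; rewrite sup_image_ge0 // andbT.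
  by apply: sup_image_le => // x; rewrite dTxx.
- move=> f g; rewrite /sup_dist; congr sup.
  by apply/seteqP; split=> _ [x _ <-]; exists x => //; rewrite dTC.
- move=> f g h; apply: sup_image_le => [x|]; last first.
    by rewrite addr_ge0 // sup_image_ge0.
  apply: le_trans (dT_tri _ (sval g x) _) _.
  by rewrite lerD //; apply: le_sup_image => y; apply: dT_le.
Qed.

Lemma metric_preserving_dist_le (f g : S -> T) x y :
  metric_preserving dS dT f -> metric_preserving dS dT g ->
  dT (f x) (g x) <= dS x y + dT (f y) (g y) + dS y x.
Proof.
case: dT_premetric => _ _ _ dT_tri fP gP.
rewrite -(fP x y) -(gP y x).
apply: le_trans (dT_tri _ (f y) _) _; rewrite -addrA lerD2l.
exact: dT_tri.
Qed.

Lemma sup_dist_totally_bounded : premetric dS ->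
  totally_bounded_pm dS -> totally_bounded_pm dT ->
  totally_bounded_pm (sup_dist dS dT).
Proof.
case=> _ _ dSC _ tbS tbT; case: (dT_premetric) => _ _ dTC dT_tri.
apply: totally_bounded_pm_of_code => eps eps0.
have del0 : 0 < eps / 8 by rewrite divr_gt0.
have [n [s s_net]] := tbS _ del0; have [m [t t_net]] := tbT _ del0.
have [ball_of ball_ofP] := choice t_net.
exists {ffun 'I_n -> 'I_m}, (fun f => [ffun i => ball_of (sval f (s i))]).
move=> [f fP] [g gP] /= same_code.
apply: (@le_lt_trans _ _ (eps / 2)); last by lra.
apply: sup_image_le => [x /=|]; last by lra.
have [i xi] := s_net x.
have /(congr1 (fun F : {ffun _ -> _} => F i)) := same_code; rewrite !ffunE => same_ball.
have := ball_ofP (f (s i)); have := ball_ofP (g (s i)).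
rewrite /pball /= same_ball => gsi fsi.
rewrite /pball /= in xi; rewrite dTC in fsi.
have := metric_preserving_dist_le x (s i) fP gP; rewrite (dSC x).
have := dT_tri (f (s i)) (t (ball_of (g (s i)))) (g (s i)).
lra.
Qed.

End MetricPreservingMaps.

Theorem mainTheorem9 (R : realType) (S T : Type)
  (dS : S -> S -> R) (dT : T -> T -> R) :
  premetric dS -> premetric dT ->
  totally_bounded_pm dS -> totally_bounded_pm dT ->
  premetric (sup_dist dS dT) /\ totally_bounded_pm (sup_dist dS dT).
Proof.
move=> pS pT tbS tbT; split.
- exact/sup_dist_premetric/(totally_bounded_pm_bounded pT).
- exact: sup_dist_totally_bounded.
Qed.
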